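(* Let $\omega\in(0,\pi/2]$ and let $S$ be a monotone sofa with rotation angle $\omega$. Then $\mathcal{M}(S)=S$.
   Context: For $t\in\mathbb{R}$ put $u_t=(\cos t,\sin t)$, $v_t=(-\sin t,\cos t)$; $R_t$ is counterclockwise rotation about the origin by $t$. For nonempty compact $X$, $p_X(t)=\max_{p\in X}p\cdot u_t$. The hallway is $L=L_H\cup L_V$, $L_H=(-\infty,1]\times[0,1]$, $L_V=[0,1]\times(-\infty,1]$. A moving sofa is a connected, nonempty, compact $S\subset\mathbb{R}^2$ such that some translate of $S$ lies in $L_H$ and can be moved by a continuous rigid motion inside $L$ to a subset of $L_V$; its rotation angle $\omega\in(0,\pi/2]$ is the total clockwise angle rotated (fixed data of the sofa). It is in standard position if $p_S(\omega)=p_S(\pi/2)=1$. Let $H=\mathbb{R}\times[0,1]$, $V=[0,1]\times\mathbb{R}$, $P_\omega=H\cap R_\omega(V)$, $L_X(t)=R_t(L)+(p_X(t)-1)u_t+(p_X(t+\pi/2)-1)v_t$. For a moving sofa $S'$ with rotation angle $\omega$ in standard position, $\mathcal{M}(S')=P_\omega\cap\bigcap_{0\le t\le\omega}L_{S'}(t)$. A monotone sofa with rotation angle $\omega$ is a set $\mathcal{M}(S')$ for such an $S'$; it is itself a moving sofa with rotation angle $\omega$ in standard position, so $\mathcal{M}(S)$ is defined for it. *)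

From mathcomp Require Import all_boot all_order all_algebra.
From mathcomp Require Import all_classical all_reals all_analysis.
Set Implicit Arguments. Unset Strict Implicit. Unset Printing Implicit Defensive.
Import Order.TTheory GRing.Theory Num.Theory.
Import numFieldNormedType.Exports.
Local Open Scope classical_set_scope.
Local Open Scope ring_scope.

Section Sofa.
Variable R : realType.
Definition pt := (R * R)%type.

Definition padd (p q : pt) : pt := (p.1 + q.1, p.2 + q.2).
Definition pscale (a : R) (p : pt) : pt := (a * p.1, a * p.2).
Definition dot (p q : pt) : R := p.1 * q.1 + p.2 * q.2.

Definition uvec (t : R) : pt := (cos t, sin t).
Definition vvec (t : R) : pt := (- sin t, cos t).

Definition rot (t : R) (p : pt) : pt :=
  (cos t * p.1 - sin t * p.2, sin t * p.1 + cos t * p.2).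

Definition supp (X : set pt) (t : R) : R := sup [set dot p (uvec t) | p in X].

Definition LH : set pt := [set p | p.1 <= 1 /\ 0 <= p.2 <= 1].
Definition LV : set pt := [set p | 0 <= p.1 <= 1 /\ p.2 <= 1].
Definition L : set pt := LH `|` LV.

Definition moved (th : R) (x : pt) (X : set pt) : set pt :=
  [set padd (rot (- th) p) x | p in X].

(* moving sofa with rotation angle w: the rigid motion is parametrized on [0,1]
   by a continuous clockwise angle th and a continuous translation x; the net
   clockwise rotation is w. *)
Definition moving_sofa (w : R) (S : set pt) : Prop :=
  [/\ 0 < w <= pi / 2, S !=set0, compact S, connected S &
   exists (th : R -> R) (x : R -> pt),
     [/\ {within `[0, 1], continuous th} /\ {within `[0, 1], continuous x},
         th 0 = 0 /\ th 1 = w,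
         moved (th 0) (x 0) S `<=` LH,
         moved (th 1) (x 1) S `<=` LV &
         forall s, 0 <= s <= 1 -> moved (th s) (x s) S `<=` L]].

Definition standard_position (w : R) (S : set pt) : Prop :=
  supp S w = 1 /\ supp S (pi / 2) = 1.

Definition Hstrip : set pt := [set p | 0 <= p.2 <= 1].
Definition Vstrip : set pt := [set p | 0 <= p.1 <= 1].
Definition Pw (w : R) : set pt := Hstrip `&` (rot w @` Vstrip).

Definition LX (X : set pt) (t : R) : set pt :=
  [set padd (padd (rot t q) (pscale (supp X t - 1) (uvec t)))
            (pscale (supp X (t + pi / 2) - 1) (vvec t)) | q in L].

Definition Mcal (w : R) (S' : set pt) : set pt :=
  Pw w `&` \bigcap_(t in [set t | 0 <= t <= w]) LX S' t.

Definition monotone_sofa (w : R) (S : set pt) : Prop :=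
  exists S' : set pt,
    [/\ moving_sofa w S', standard_position w S' & S = Mcal w S'].

End Sofa.

(* If a sofa S' fits in some translate of the rotated hallway R_t(L), it fits in
   the tightest one L_{S'}(t), whose walls touch S' in the directions u_t and
   v_t; in standard position S' also lies in P_w.  Hence S' is contained in
   M(S'), which in turn lies in every L_{S'}(t), so M(S') has the same support
   values as S' at t and t + pi/2 for 0 <= t <= w.  These values are all that
   M depends on, so M(M(S')) = M(S'). *)
From Pilot Require Import Defs.
From mathcomp Require Import all_boot all_order all_algebra.
From mathcomp Require Import all_classical all_reals all_analysis.
From mathcomp Require Import ring lra.

Set Implicit Arguments.
Unset Strict Implicit.
Import Order.TTheory GRing.Theory Num.Theory.
Local Open Scope classical_set_scope.
Local Open Scope ring_scope.

Local Notation rot := Pilot.Defs.rot.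
Local Notation supp := Pilot.Defs.supp.
Local Notation L := (@Pilot.Defs.L _).

Section Sofa.
Variable R : realType.
Implicit Types (t w : R) (p q y : pt R) (A X Y S : set (pt R)).

Lemma rot0 p : rot 0 p = p.
Proof. by case: p => a b; rewrite /rot cos0 sin0 /= !mul1r !mul0r subr0 add0r. Qed.

Lemma rotK t : cancel (rot t) (rot (- t)).
Proof.
move=> [a b]; rewrite /rot cosN sinN /=.
by congr pair; rewrite -[RHS]mul1r -(cos2Dsin2 t); ring.
Qed.

Lemma rotNK t : cancel (rot (- t)) (rot t).
Proof. by move=> p; have := rotK (- t) p; rewrite opprK. Qed.

Lemma rot_image t A : rot t @` A = [set p | A (rot (- t) p)].
Proof.
apply/seteqP; split=> [_ [q Aq <-] | p Ap] /=; first by rewrite rotK.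
by exists (rot (- t) p); rewrite ?rotNK.
Qed.

Lemma suppE X t : supp X t = sup [set (rot (- t) p).1 | p in X].
Proof.
rewrite /supp; congr sup; apply: eq_imagel => -[a b] _.
by rewrite /rot /dot /uvec cosN sinN /=; ring.
Qed.

Lemma supp_pihalfE X t :
  supp X (t + pi / 2) = sup [set (rot (- t) p).2 | p in X].
Proof.
rewrite /supp; congr sup; apply: eq_imagel => -[a b] _.
by rewrite /rot /dot /uvec cosDpihalf sinDpihalf cosN sinN /=; ring.
Qed.

(* L_X(t) is the hallway R_t(L) translated so that its outer walls are the
   support lines of X in the directions u_t and v_t. *)
Lemma LXE X t : LX X t =
  [set p | L (padd (rot (- t) p) (1 - supp X t, 1 - supp X (t + pi / 2)))].
Proof.
have frameE a b q : rot (- t) (padd (padd (rot t q) (pscale a (uvec t)))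
                                   (pscale b (vvec t))) = (q.1 + a, q.2 + b).
  rewrite /rot /padd /pscale /uvec /vvec cosN sinN /=.
  by congr pair; rewrite -[RHS]mul1r -(cos2Dsin2 t); ring.
apply/seteqP; split=> [_ [q Lq <-] | p Lp] /=.
  rewrite frameE (_ : padd _ _ = q) //.
  by case: q {Lq} => a b; rewrite /padd /=; congr pair; ring.
eexists; first exact: Lp.
apply: (can_inj (rotNK t)); rewrite frameE /padd /=.
by congr pair; ring.
Qed.

Lemma L_le1 p : L p -> p.1 <= 1 /\ p.2 <= 1.
Proof. by case=> [[? /andP[_ ?]] | [/andP[_ ?] ?]]. Qed.

Lemma L_mono p q : L p -> p.1 <= q.1 <= 1 -> p.2 <= q.2 <= 1 -> L q.
Proof.
move=> [[_ /andP[p2 _]] | [/andP[p1 _] _]] /andP[pq1 q1] /andP[pq2 q2].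
  by left; split=> //; apply/andP; split; lra.
by right; split=> //; apply/andP; split; lra.
Qed.

Section SupImage.
Variables (T : Type) (f : T -> R).

Lemma le_sup_image (X : set T) b x : (forall z, X z -> f z <= b) -> X x ->
  f x <= sup [set f z | z in X].
Proof.
move=> fb Xx; apply: ub_le_sup; last by exists x.
by exists b => _ [z Xz <-]; exact: fb.
Qed.

Lemma sup_image_le (X : set T) b : X !=set0 -> (forall z, X z -> f z <= b) ->
  sup [set f z | z in X] <= b.
Proof.
move=> [x Xx] fb; apply: ge_sup; first by exists (f x), x.
by move=> _ [z Xz <-]; exact: fb.
Qed.

Lemma sup_image_sub (X Y : set T) : X `<=` Y -> X !=set0 ->
  (forall z, Y z -> f z <= sup [set f z | z in X]) ->
  sup [set f z | z in Y] = sup [set f z | z in X].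
Proof.
move=> XY [x Xx] fY; apply/eqP; rewrite eq_le sup_image_le //=.
  by apply: sup_image_le => [|z Xz]; [exists x | apply: le_sup_image fY _; exact: XY].
by exists x; exact: XY.
Qed.

(* sup f(X) = 1 forces the shift c to be nonpositive. *)
Lemma itv01_of_shifted (X : set T) c x : X x ->
  (forall z, X z -> 0 <= f z + c <= 1) -> sup [set f z | z in X] = 1 ->
  0 <= f x <= 1.
Proof.
move=> Xx fc sup1.
have ub z : X z -> f z <= 1 - c by move=> /fc /andP[_]; lra.
have fx1 : f x <= 1 by rewrite -sup1; exact: le_sup_image ub Xx.
have : sup [set f z | z in X] <= 1 - c by apply: sup_image_le ub; exists x.
by rewrite sup1; have /andP[fx0 _] := fc x Xx; rewrite fx1 andbT; lra.
Qed.

End SupImage.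

Lemma moving_sofa_fit w S t : moving_sofa w S -> 0 <= t <= w ->
  exists y, moved t y S `<=` L.
Proof.
move=> [/andP[w0 _] _ _ _ [th [x [[th_cont _] [th0 th1] _ _ fitL]]]] tw.
have : Num.min (th 0) (th 1) <= t <= Num.max (th 0) (th 1).
  by rewrite th0 th1 (min_idPl (ltW w0)) (max_idPr (ltW w0)).
case/(IVT ler01 th_cont) => s; rewrite in_itv /= => s01 <-.
by exists (x s); exact: fitL.
Qed.

Lemma sub_LX t y X : moved t y X `<=` L -> X `<=` LX X t.
Proof.
move=> fitL p Xp; rewrite LXE.
have Ly q : X q -> L (padd (rot (- t) q) y) by move=> Xq; apply: fitL; exists q.
have ub1 q : X q -> (rot (- t) q).1 <= 1 - y.1 by move/Ly/L_le1 => /= []; lra.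
have ub2 q : X q -> (rot (- t) q).2 <= 1 - y.2 by move/Ly/L_le1 => /= []; lra.
have ne : X !=set0 by exists p.
have s1 := sup_image_le ne ub1; have p1 := le_sup_image ub1 Xp.
have s2 := sup_image_le ne ub2; have p2 := le_sup_image ub2 Xp.
rewrite -suppE in s1 p1; rewrite -supp_pihalfE in s2 p2.
apply: (L_mono (Ly p Xp)); move: s1 p1 s2 p2;
  by case: (rot (- t) p) => a b /= *; apply/andP; split; lra.
Qed.

Lemma LX_le_supp X t p : LX X t p ->
  (rot (- t) p).1 <= supp X t /\ (rot (- t) p).2 <= supp X (t + pi / 2).
Proof. by rewrite LXE => /L_le1 /= []; lra. Qed.

Lemma standard_sofa_sub_Pw w S : moving_sofa w S -> standard_position w S ->
  S `<=` Pw w.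
Proof.
move=> [_ _ _ _ [th [x [_ [th0 th1] inLH inLV _]]]] [suppw supppi] p Sp.
split; rewrite ?rot_image /Hstrip /Vstrip /=.
- apply: (itv01_of_shifted (f := fun q => q.2) (c := (x 0).2) Sp) => [q Sq|].
    by have := inLH _ (ex_intro2 _ _ q Sq erefl); rewrite th0 oppr0 rot0 => -[].
  rewrite -supppi -[pi / 2]add0r supp_pihalfE; congr sup.
  by apply: eq_imagel => z _; rewrite oppr0 rot0.
- apply: (itv01_of_shifted (f := fun q => (rot (- w) q).1) (c := (x 1).1) Sp)
    => [q Sq|].
    by have := inLV _ (ex_intro2 _ _ q Sq erefl); rewrite th1 => -[].
  by rewrite -suppw suppE.
Qed.

Lemma sub_Mcal w S : moving_sofa w S -> standard_position w S -> S `<=` Mcal w S.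
Proof.
move=> sofa std p Sp; split; first exact: standard_sofa_sub_Pw sofa std p Sp.
by move=> t tw; have [y /sub_LX] := moving_sofa_fit sofa tw; apply.
Qed.

Lemma supp_Mcal w S t : moving_sofa w S -> standard_position w S -> 0 <= t <= w ->
  supp (Mcal w S) t = supp S t /\ supp (Mcal w S) (t + pi / 2) = supp S (t + pi / 2).
Proof.
move=> sofa std tw; have [_ neS _ _ _] := sofa.
have le_supp p : Mcal w S p ->
    (rot (- t) p).1 <= supp S t /\ (rot (- t) p).2 <= supp S (t + pi / 2).
  by move=> [_ /(_ t tw) /LX_le_supp].
rewrite !supp_pihalfE !suppE.
split; apply: sup_image_sub (sub_Mcal sofa std) neS _ => p /le_supp [].
- by rewrite suppE.
- by rewrite supp_pihalfE.
Qed.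

Lemma eq_Mcal w X Y : (forall t, 0 <= t <= w ->
    supp X t = supp Y t /\ supp X (t + pi / 2) = supp Y (t + pi / 2)) ->
  Mcal w X = Mcal w Y.
Proof.
move=> eq_supp; rewrite /Mcal; congr (_ `&` _); apply: eq_bigcapr => t tw.
by rewrite /LX; case: (eq_supp t tw) => -> ->.
Qed.

End Sofa.

Theorem theorem3p15 (R : realType) (w : R) (S : set (pt R)) :
  0 < w <= pi / 2 -> monotone_sofa w S -> Mcal w S = S.
Proof.
move=> _ [S' [sofa std ->]].
by apply: eq_Mcal => t tw; exact: supp_Mcal.
Qed.
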